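(* For every integer $k\ge 2$ and every $h>k/(2k-1)$ there is an instance with $k$ groups of binary agents in which no allocation is $h$-democratic positive-MMS-fair.
   Context: There is a finite set $G$ of goods and $k$ groups $A_1,\dots,A_k$ with $n_i\ge1$ agents in $A_i$. A binary agent has an additive utility with $u_a(\{g\})\in\{0,1\}$. An allocation is a partition $(G_1,\dots,G_k)$ of $G$; agents of $A_i$ get $u_a(G_i)$. $\mathrm{MMS}^k_a(G)$ is the maximum over partitions of $G$ into $k$ sets of the minimum of $u_a$ over those sets. The allocation is positive-MMS-fair for $a\in A_i$ if $\mathrm{MMS}^k_a(G)>0$ implies $u_a(G_i)>0$. An allocation is $h$-democratic fair if for each $i$ at least $h\cdot n_i$ agents of $A_i$ find it fair. *)

From HB Require Import structures.
From mathcomp Require Import all_boot all_order all_algebra.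
Set Implicit Arguments. Unset Strict Implicit. Unset Printing Implicit Defensive.
Import Order.TTheory GRing.Theory Num.Theory.
Local Open Scope ring_scope.

(* A binary agent is given by its valuation v : G -> bool (u_a({g}) = v g).
   Its additive utility of a bundle S is the number of goods in S it values. *)
Definition util (G : finType) (v : G -> bool) (S : {set G}) : nat :=
  #|[set g in S | v g]|.

(* A partition of G into k (possibly empty) labelled sets is a map G -> 'I_k;
   bundle p j is the j-th part. *)
Definition bundle (G : finType) (k : nat) (p : {ffun G -> 'I_k}) (j : 'I_k)
  : {set G} := [set g | p g == j].

(* MMS^k_v(G) = max over partitions into k sets of the min utility of a part.
   The inner min uses #|G| as neutral element, which is harmless since every
   utility is <= #|G| and k >= 1 in all uses. *)
Definition mms (G : finType) (k : nat) (v : G -> bool) : nat :=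
  \max_(p : {ffun G -> 'I_k}) \big[minn/#|G|]_(j < k) util v (bundle p j).

Definition pos_mms_fair (G : finType) (k : nat) (v : G -> bool)
  (p : {ffun G -> 'I_k}) (i : 'I_k) : bool :=
  (0 < mms k v)%N ==> (0 < util v (bundle p i))%N.

Definition h_democratic_fair (R : realFieldType) (h : R) (G : finType) (k : nat)
  (n : 'I_k -> nat) (u : forall i : 'I_k, 'I_(n i) -> G -> bool)
  (p : {ffun G -> 'I_k}) : Prop :=
  forall i : 'I_k,
    h * (n i)%:R <= (#|[set a : 'I_(n i) | pos_mms_fair (u i a) p i]|)%:R.

From HB Require Import structures.
From mathcomp Require Import all_boot all_order all_algebra zify.
Import Order.TTheory GRing.Theory Num.Theory.

Set Implicit Arguments.
Unset Strict Implicit.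
Unset Printing Implicit Defensive.

(* Take 2k-1 goods on a cycle and, in every group, 2k-1 agents, agent a
   valuing the k consecutive goods a, a+1, ..., a+k-1.  Each agent can split
   its window into k singletons, so all agents have positive MMS.  With only
   2k-1 goods some group gets at most one good g, and then only the k agents
   whose window contains g are satisfied in that group: a fraction
   k/(2k-1) < h. *)

Lemma sum_card_bundle (G : finType) (k : nat) (p : {ffun G -> 'I_k}) :
  (\sum_(i < k) #|bundle p i|)%N = #|G|.
Proof.
rewrite -sum1_card (partition_big p xpredT) //=.
apply: eq_bigr => i _; rewrite -sum1_card; apply: eq_bigl => g.
by rewrite /bundle inE.
Qed.

Lemma small_bundle_exists (G : finType) (k : nat) (p : {ffun G -> 'I_k}) :
  (#|G| < 2 * k)%N -> exists i, (#|bundle p i| <= 1)%N.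
Proof.
move=> G_small; apply/existsP; apply: contraLR G_small.
rewrite negb_exists -leqNgt => /forallP big_bundles.
rewrite -(sum_card_bundle p) mulnC -{1}[k]card_ord -sum_nat_const.
by apply: leq_sum => i _; rewrite ltnNge big_bundles.
Qed.

Lemma mms_gt0 (G : finType) (k : nat) (v : G -> bool) (p : {ffun G -> 'I_k}) :
  (0 < #|G|)%N -> (forall j, 0 < util v (bundle p j))%N -> (0 < mms k v)%N.
Proof.
move=> G_gt0 util_gt0; apply: leq_trans (leq_bigmax p).
by apply: (big_ind (fun x => 0 < x)%N) => // x y x_gt0 y_gt0; rewrite leq_min x_gt0.
Qed.

Lemma subset1_of_card_le1 (T : finType) (x0 : T) (A : {set T}) :
  (#|A| <= 1)%N -> exists x, A \subset [set x].
Proof.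
move=> /card_le1_eqP A_le1; have [-> | [x x_in]] := set_0Vmem A.
- by exists x0; apply: sub0set.
- by exists x; apply/subsetP => y y_in; rewrite inE (A_le1 y x).
Qed.

Lemma pos_mms_fair_sub (G : finType) (k n : nat) (u : 'I_n -> G -> bool)
    (p : {ffun G -> 'I_k}) (i : 'I_k) (g0 : G) :
  (forall a, 0 < mms k (u a))%N -> bundle p i \subset [set g0] ->
  [set a | pos_mms_fair (u a) p i] \subset [set a | u a g0].
Proof.
move=> mms_u_gt0 /subsetP bundle_sub.
apply/subsetP => a; rewrite !inE /pos_mms_fair mms_u_gt0 /= => /card_gt0P [g].
by rewrite inE => /andP [/bundle_sub]; rewrite inE => /eqP ->.
Qed.

Local Open Scope ring_scope.

(* Subtraction on 'I_m.+1 is modulo m+1, so this is the cyclic window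
   a, a+1, ..., a+k-1. *)
Definition window {m : nat} (k : nat) (a g : 'I_m.+1) : bool :=
  (val (g - a)%R < k)%N.

Lemma card_window_agents (m k : nat) (g : 'I_m.+1) :
  (#|[set a | window k a g]| <= k)%N.
Proof.
rewrite -[k in (_ <= k)%N]card_ord -cardsT.
apply: leq_trans (leq_imset_card (fun j : 'I_k => g - inord j) [set: 'I_k]).
apply: subset_leq_card; apply/subsetP => a; rewrite inE /window => lt_k.
apply/imsetP; exists (Ordinal lt_k); first by rewrite inE.
have -> : inord (Ordinal lt_k) = g - a :> 'I_m.+1 by apply: inord_val.
by rewrite opprB addrC subrK.
Qed.

Lemma mms_window_gt0 (m k : nat) (a : 'I_m.+1) :
  (k < m.+1)%N -> (0 < mms k.+1 (window k.+1 a))%N.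
Proof.
move=> k_le_m.
apply: (@mms_gt0 _ _ _ [ffun g => inord (val (g - a))]) => [|j].
  by rewrite card_ord.
have j_lt : (j < m.+1)%N by apply: leq_trans k_le_m.
have offset_j : val (a + inord j - a) = j by rewrite addrC addKr; apply: inordK.
apply/card_gt0P; exists (a + inord j).
by rewrite !inE /window offset_j ltn_ord andbT ffunE offset_j inord_val.
Qed.

Theorem mainTheorem14 (R : realFieldType) (k : nat) (h : R) :
  (2 <= k)%N -> k%:R / (2 * k - 1)%N%:R < h ->
  exists (G : finType) (n : 'I_k -> nat)
         (u : forall i : 'I_k, 'I_(n i) -> G -> bool),
    (forall i, (0 < n i)%N) /\
    forall p : {ffun G -> 'I_k}, ~ @h_democratic_fair R h G k n u p.
Proof.
case: k => [|k] // k_ge2 h_gt.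
have m_eq : (2 * k.+1 - 1)%N = (2 * k).+1 by lia.
rewrite m_eq ltr_pdivrMr ?ltr0n // in h_gt.
exists 'I_(2 * k).+1, (fun _ => (2 * k).+1), (fun _ => window k.+1).
split => // p fair.
have [i bundle_le1] : exists i, (#|bundle p i| <= 1)%N.
  by apply: small_bundle_exists; rewrite card_ord; lia.
have [g0 bundle_sub] := subset1_of_card_le1 ord0 bundle_le1.
have fair_le : (#|[set a | pos_mms_fair (window k.+1 a) p i]| <= k.+1)%N.
  apply: leq_trans (card_window_agents k.+1 g0); apply: subset_leq_card.
  by apply: pos_mms_fair_sub => // a; apply: mms_window_gt0; lia.
have : h * (2 * k).+1%:R <= k.+1%:R by apply: le_trans (fair i) _; rewrite ler_nat.
by rewrite leNgt h_gt.
Qed.
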